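(* Let $m\ge0$, let $f:\mathbb{R}^n\to\mathbb{R}$ be $m$-weakly convex, let $\rho>0$, $\alpha=m+\rho$, $\beta\in(0,1)$, and $x_k\in\mathbb{R}^n$. Let $\tilde f:\mathbb{R}^n\to\mathbb{R}$ be convex with $\tilde f(x)\le f(x)+\frac m2\|x-x_k\|^2$ for all $x$, let $z_{k+1}=\arg\min_x\{\tilde f(x)+\frac{\rho}{2}\|x-x_k\|^2\}$, $\tilde g_{k+1}:=\alpha(x_k-z_{k+1})$ and $\epsilon_{k+1}:=f(z_{k+1})+\frac m2\|z_{k+1}-x_k\|^2-\tilde f(z_{k+1})$. Suppose $$f(x_k)-\Big(f(z_{k+1})+\frac m2\|z_{k+1}-x_k\|^2\Big)\ge\beta\big(f(x_k)-\tilde f(z_{k+1})\big).$$ Then $\tilde g_{k+1}\in\partial_{\epsilon_{k+1}}f(z_{k+1})$ and $$f(z_{k+1})\le f(x_k)-\frac{m+\beta\rho}{\alpha}\cdot\frac{1}{2\alpha}\|\tilde g_{k+1}\|^2,\qquad \epsilon_{k+1}\le\frac{1-\beta}{\beta}\Big(f(x_k)-f(z_{k+1})-\frac{m}{2\alpha^2}\|\tilde g_{k+1}\|^2\Big).$$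
   Context: A function $f$ is $m$-weakly convex ($m\ge 0$) if $x\mapsto f(x)+\frac{m}{2}\|x\|^2$ is convex. For $\epsilon\ge 0$, the $\epsilon$-inexact subdifferential at $x$ is $\partial_\epsilon f(x)=\{v\in\mathbb{R}^n: f(y)\ge f(x)+\langle v,y-x\rangle-\frac{m}{2}\|y-x\|^2-\epsilon\ \ \forall y\in\mathbb{R}^n\}$. *)

From HB Require Import structures.
From mathcomp Require Import all_boot all_order all_algebra.
From mathcomp Require Import reals.
Set Implicit Arguments. Unset Strict Implicit. Unset Printing Implicit Defensive.
Import Order.TTheory GRing.Theory Num.Theory.
Local Open Scope ring_scope.

Section Defs.
Variables (R : realType) (n : nat).
Notation vec := 'rV[R]_n.

Definition edot (u v : vec) : R := \sum_(i < n) u 0 i * v 0 i.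
Definition enorm (u : vec) : R := Num.sqrt (edot u u).

Definition convex_fun (f : vec -> R) : Prop :=
  forall (x y : vec) (t : R), 0 <= t -> t <= 1 ->
    f (t *: x + (1 - t) *: y) <= t * f x + (1 - t) * f y.

Definition weakly_convex (m : R) (f : vec -> R) : Prop :=
  convex_fun (fun x => f x + m / 2 * enorm x ^+ 2).

Definition inexact_subdiff (m : R) (f : vec -> R) (eps : R) (x v : vec) : Prop :=
  forall y : vec, f y >= f x + edot v (y - x) - m / 2 * enorm (y - x) ^+ 2 - eps.

Definition is_argmin (g : vec -> R) (z : vec) : Prop :=
  forall x : vec, g z <= g x.
End Defs.

(* Since [z] is the proximal point of the convex model [ftilde] at [xk],
   [rho (xk - z)] is a subgradient of [ftilde] at [z].  As [ftilde] lies below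
   [f + m/2 |. - xk|^2], expanding that square around [z] turns it into an
   [eps]-subgradient of [f] with the modulus [alpha = m + rho], [eps] being the
   model error at [z].  Testing the subgradient inequality at [xk] gives
   [f xk - ftilde z >= rho |z - xk|^2]; with the descent test and
   [|g|^2 = alpha^2 |z - xk|^2] this yields both estimates. *)
From HB Require Import structures.
From mathcomp Require Import all_boot all_order all_algebra.
From mathcomp Require Import reals.
From mathcomp Require Import ring lra.
Set Implicit Arguments. Unset Strict Implicit. Unset Printing Implicit Defensive.
Import Order.TTheory GRing.Theory Num.Theory.
Local Open Scope ring_scope.

Section Euclidean.
Variables (R : realType) (n : nat).
Implicit Types (u v w : 'rV[R]_n) (a : R).

Lemma edotC u v : edot u v = edot v u.
Proof. by apply: eq_bigr => i _; rewrite mulrC. Qed.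

Lemma edotDl u v w : edot (u + v) w = edot u w + edot v w.
Proof. by rewrite /edot -big_split; apply: eq_bigr => i _; rewrite mxE mulrDl. Qed.

Lemma edotZl a u w : edot (a *: u) w = a * edot u w.
Proof. by rewrite /edot mulr_sumr; apply: eq_bigr => i _; rewrite mxE mulrA. Qed.

Lemma edotNl u w : edot (- u) w = - edot u w.
Proof. by rewrite -scaleN1r edotZl mulN1r. Qed.

Lemma edotDr u v w : edot w (u + v) = edot w u + edot w v.
Proof. by rewrite edotC edotDl !(edotC w). Qed.

Lemma edotZr a u w : edot w (a *: u) = a * edot w u.
Proof. by rewrite edotC edotZl edotC. Qed.

Lemma edot_ge0 u : 0 <= edot u u.
Proof. by apply: sumr_ge0 => i _; rewrite -expr2 sqr_ge0. Qed.

Lemma enorm0 : enorm (0 : 'rV[R]_n) = 0.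
Proof. by rewrite /enorm /edot big1 ?sqrtr0 // => i _; rewrite mxE mul0r. Qed.

Lemma enorm2E u : enorm u ^+ 2 = edot u u.
Proof. by rewrite /enorm sqr_sqrtr // edot_ge0. Qed.

Lemma enorm2_ge0 u : 0 <= enorm u ^+ 2.
Proof. by rewrite enorm2E edot_ge0. Qed.

Lemma enorm2D u v :
  enorm (u + v) ^+ 2 = enorm u ^+ 2 + 2 * edot u v + enorm v ^+ 2.
Proof. by rewrite !enorm2E edotDl !edotDr [edot v u]edotC; ring. Qed.

Lemma enorm2Z a u : enorm (a *: u) ^+ 2 = a ^+ 2 * enorm u ^+ 2.
Proof. by rewrite !enorm2E edotZl edotZr mulrA -expr2. Qed.

Lemma enorm2N u : enorm (- u) ^+ 2 = enorm u ^+ 2.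
Proof. by rewrite -scaleN1r enorm2Z sqrrN expr1n mul1r. Qed.

Lemma enorm2_subC u v : enorm (u - v) ^+ 2 = enorm (v - u) ^+ 2.
Proof. by rewrite -enorm2N opprB. Qed.

End Euclidean.

Lemma ge0_of_small_quadratic_ge0 (R : realFieldType) (a c : R) :
  (forall t, 0 < t -> t <= 1 -> 0 <= t * a + t ^+ 2 * c) -> 0 <= a.
Proof.
move=> quad_ge0; rewrite leNgt; apply/negP => a_lt0.
have ca_gt0 : 0 < `|c| - a by have := normr_ge0 c; lra.
(* [t] is chosen so that [t |c| < - a]. *)
set t := - a / (`|c| - a).
have tE : t * (`|c| - a) = - a by rewrite /t divfK // gt_eqF.
have t_gt0 : 0 < t by rewrite /t divr_gt0 // oppr_gt0.
have t_le1 : t <= 1 by rewrite /t ler_pdivrMr // mul1r; have := normr_ge0 c; lra.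
have c_le : t ^+ 2 * c <= t ^+ 2 * `|c| by rewrite ler_wpM2l ?sqr_ge0 ?ler_norm.
have tc_lt : t * `|c| < - a.
  rewrite -tE mulrBr.
  have : 0 < t * - a by rewrite mulr_gt0 // oppr_gt0.
  rewrite mulrN; lra.
have := quad_ge0 t t_gt0 t_le1.
have : t * (t * `|c| + a) < 0 by rewrite pmulr_rlt0 //; lra.
rewrite expr2 in c_le; lra.
Qed.

Section ProximalStep.
Variables (R : realType) (n : nat).
Variables (rho : R) (ft : 'rV[R]_n -> R) (xk z : 'rV[R]_n).
Hypothesis ft_convex : convex_fun ft.
Hypothesis z_prox : is_argmin (fun x => ft x + rho / 2 * enorm (x - xk) ^+ 2) z.

Lemma prox_subgrad y : ft z + rho * edot (xk - z) (y - z) <= ft y.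
Proof.
set u := y - z; set v := z - xk.
suff : 0 <= ft y - ft z + rho * edot u v.
  by rewrite -(opprB z xk) -/v edotNl edotC; lra.
apply: (@ge0_of_small_quadratic_ge0 _ _ (rho / 2 * enorm u ^+ 2)) => t t_gt0 t_le1.
have := ft_convex y z (ltW t_gt0) t_le1.
have := z_prox (t *: y + (1 - t) *: z) => /=.
have -> : t *: y + (1 - t) *: z - xk = t *: u + v.
  by rewrite /u /v scalerBl scale1r scalerBr !addrA [t *: y + z - _]addrAC.
rewrite [enorm (t *: u + v) ^+ 2]enorm2D enorm2Z edotZl -/v; lra.
Qed.

Lemma prox_model_decrease : ft z + rho * enorm (z - xk) ^+ 2 <= ft xk.
Proof. by rewrite enorm2_subC enorm2E; exact: prox_subgrad. Qed.

End ProximalStep.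

Lemma inexact_subdiff_of_model (R : realType) (n : nat) (m rho : R)
    (f ft : 'rV[R]_n -> R) (xk z : 'rV[R]_n) :
  (forall x, ft x <= f x + m / 2 * enorm (x - xk) ^+ 2) ->
  (forall y, ft z + rho * edot (xk - z) (y - z) <= ft y) ->
  inexact_subdiff m f (f z + m / 2 * enorm (z - xk) ^+ 2 - ft z) z
    ((m + rho) *: (xk - z)).
Proof.
move=> ft_le subgrad y; have := subgrad y; have := ft_le y.
have -> : y - xk = (y - z) + (z - xk) by rewrite addrA subrK.
rewrite -(opprB z xk) enorm2D edotZl edotNl edotC.
lra.
Qed.

Theorem mainTheorem5 (R : realType) (n : nat) (m rho beta : R)
    (f ftilde : 'rV[R]_n -> R) (xk z : 'rV[R]_n) :
  0 <= m ->
  weakly_convex m f ->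
  0 < rho ->
  0 < beta -> beta < 1 ->
  convex_fun ftilde ->
  (forall x, ftilde x <= f x + m / 2 * enorm (x - xk) ^+ 2) ->
  is_argmin (fun x => ftilde x + rho / 2 * enorm (x - xk) ^+ 2) z ->
  let alpha := m + rho in
  let g := alpha *: (xk - z) in
  let eps := f z + m / 2 * enorm (z - xk) ^+ 2 - ftilde z in
  f xk - (f z + m / 2 * enorm (z - xk) ^+ 2) >= beta * (f xk - ftilde z) ->
  [/\ inexact_subdiff m f eps z g,
      f z <= f xk - (m + beta * rho) / alpha * (1 / (2 * alpha)) * enorm g ^+ 2
    & eps <= (1 - beta) / beta * (f xk - f z - m / (2 * alpha ^+ 2) * enorm g ^+ 2)].
Proof.
move=> m_ge0 _ rho_gt0 beta_gt0 beta_lt1 ft_convex ft_le z_prox alpha g eps descent.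
have alpha_neq0 : alpha != 0 by rewrite gt_eqF // /alpha; lra.
set D := enorm (z - xk) ^+ 2 in descent *.
have gE : enorm g ^+ 2 = alpha ^+ 2 * D by rewrite enorm2Z enorm2_subC.
have model_gap : rho * D <= f xk - ftilde z.
  have := ft_le xk; rewrite subrr enorm0 expr0n mulr0 addr0.
  have := prox_model_decrease ft_convex z_prox; rewrite -/D; lra.
have D_ge0 : 0 <= D := enorm2_ge0 _.
split.
- exact: inexact_subdiff_of_model ft_le (prox_subgrad ft_convex z_prox).
- rewrite gE (_ : _ * _ * (alpha ^+ 2 * D) = (m + beta * rho) / 2 * D); last by field.
  have : beta * (rho * D) <= beta * (f xk - ftilde z) by rewrite ler_pM2l.
  have := mulr_ge0 (ltW beta_gt0) (mulr_ge0 (ltW rho_gt0) D_ge0).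
  lra.
- rewrite gE (_ : _ * (alpha ^+ 2 * D) = m / 2 * D); last by field.
  set A := f xk - f z - m / 2 * D.
  rewrite (_ : _ * A = A / beta - A); last by field; rewrite gt_eqF.
  have : f xk - ftilde z <= A / beta by rewrite ler_pdivlMr // mulrC /A; lra.
  rewrite /eps -/D /A; lra.
Qed.
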